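(* Let $G$ be a connected graph. (i) For any $R\subseteq V(G)$: if $v_1v_2\cdots v_kv_1$ ($k\geq 3$) is a cycle in $G_R$ and some edge of this cycle belongs to $\mathcal{U}_R(r)$ for some $r\in R$, then at least two edges of this cycle belong to $\mathcal{U}_R(r)$. (ii) Let $R$ be a resolving set of $G$ and $r\in R$, and let $x,y,z\in V(G)$ be distinct. If $\{x,y\}\in\mathcal{U}_R(r)$ and $\{x,z\}\in\mathcal{U}_R(r)$, then $\{y,z\}\in\mathcal{U}_R(r)$. (iii) If $b$ is a basis forced vertex of $G$ and $R$ is a metric basis of $G$, then $|\mathcal{U}_R(b)|\geq 2$. (iv) If $b$ is a basis forced vertex of $G$ and $R$ is a metric basis of $G$, then there exist $x,y\in V(G)\setminus R$ with $\{x,y\}\in\mathcal{U}_R(b)$.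
   Context: All graphs are finite and simple. For vertices $u,v$ of a connected graph $G$, $d(u,v)$ is the length of a shortest $u$–$v$ path. A set $R\subseteq V(G)$ is a resolving set if for all distinct $x,y\in V(G)$ there is $r\in R$ with $d(r,x)\neq d(r,y)$; a resolving set of minimum cardinality is a metric basis; a vertex is a basis forced vertex if it belongs to every metric basis. For $R\subseteq V(G)$ and $r\in R$, $\mathcal{U}_R(r)$ is the set of unordered pairs $\{x,y\}$ of vertices of $G$ such that $d(r,x)\neq d(r,y)$ and $d(t,x)=d(t,y)$ for all $t\in R\setminus\{r\}$ (pairs resolved by $r$ and by no other element of $R$). The colour graph $G_R$ has vertex set $V(G)$ and edge set $\bigcup_{r\in R}\mathcal{U}_R(r)$; the edges in $\mathcal{U}_R(r)$ are said to have the colour associated with $r$ (these sets are pairwise disjoint). *)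

From mathcomp Require Import all_boot all_order.
Set Implicit Arguments. Unset Strict Implicit. Unset Printing Implicit Defensive.

Section Defs.
Variables (T : finType) (e : rel T).

Definition simple_graph := symmetric e /\ irreflexive e.
Definition connected_graph := forall u v : T, connect e u v.

Definition walkn (u v : T) (n : nat) : bool :=
  [exists p : n.-tuple T, path e u p && (last u p == v)].

(* d(u,v): least n such that there is a u-v walk of length n
   (= length of a shortest u-v path); for a connected graph it is < #|T| *)
Definition dist (u v : T) : nat := find (walkn u v) (iota 0 #|T|).

Definition resolving (R : {set T}) : Prop :=
  forall x y : T, x != y -> exists2 r, r \in R & dist r x != dist r y.

Definition metric_basis (R : {set T}) : Prop :=
  resolving R /\ forall S : {set T}, resolving S -> #|R| <= #|S|.

Definition basis_forced (b : T) : Prop :=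
  forall R : {set T}, metric_basis R -> b \in R.

Definition uniq_res (R : {set T}) (r : T) : {set {set T}} :=
  [set P : {set T} | [exists x, exists y,
     [&& P == [set x; y], dist r x != dist r y &
         [forall t in R :\ r, dist t x == dist t y]]]].

Definition colour_edges (R : {set T}) : {set {set T}} :=
  \bigcup_(r in R) uniq_res R r.

Definition cycle_edges (s : seq T) : seq {set T} :=
  [seq [set p.1; p.2] | p <- zip s (rot 1 s)].

Definition colour_cycle (R : {set T}) (s : seq T) : bool :=
  [&& uniq s, 3 <= size s & all (fun P => P \in colour_edges R) (cycle_edges s)].

End Defs.

From mathcomp Require Import all_boot all_order.
Set Implicit Arguments. Unset Strict Implicit. Unset Printing Implicit Defensive.

(* {x,y} has colour r exactly when r is the only element of R separating x
   and y. (i): an edge of G_R has colour r iff d(r,.) changes along it, and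
   along a closed walk a function cannot change exactly once. (ii): the other
   elements of R separate neither x,y nor x,z, hence not y,z, so r must.
   (iii): a set containing R \ b that separates every pair of colour b is
   resolving. With no such pair R \ b would be a smaller resolving set; with a
   single pair {x,y}, both x |: (R \ b) and y |: (R \ b) would be metric bases
   (x separates itself from y), forcing x = b = y. (iv): an element of R lying
   in a pair of colour b is b itself, and two pairs {b,y1}, {b,y2} of colour b
   yield the pair {y1,y2} by (ii). *)

Section UniquelyResolvedPairs.
Variables (T : finType) (e : rel T).

Lemma walkn0 u v : walkn e u v 0 = (u == v).
Proof.
apply/existsP/eqP => [[p /andP [_ /eqP]]|->]; first by rewrite (tuple0 p).
by exists [tuple]; rewrite /= eqxx.
Qed.

Lemma dist_eq0 u v : (dist e u v == 0) = (u == v).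
Proof.
rewrite /dist; have : 0 < #|T| by apply/card_gt0P; exists u.
by case: #|T| => // n _; rewrite /= walkn0; case: (u == v).
Qed.

Lemma distxx u : dist e u u = 0.
Proof. by apply/eqP; rewrite dist_eq0. Qed.

Lemma set2_eq (a b x y : T) :
  [set a; b] = [set x; y] -> (a = x /\ b = y) \/ (a = y /\ b = x).
Proof.
move=> E; have /set2P[ax | ay] : a \in [set x; y] by rewrite -E set21.
all: have /set2P[bx | by'] : b \in [set x; y] by rewrite -E set22.
all: subst a b; try by [left | right].
  have : y \in [set x; x] by rewrite E set22.
  by case/set2P=> ->; right.
have : x \in [set y; y] by rewrite E set21.
by case/set2P=> ->; left.
Qed.

Section Pairs.
Variables (R : {set T}) (r : T).

Definition uniquely_separates (a b : T) :=
  dist e r a != dist e r b /\ {in R :\ r, forall t, dist e t a = dist e t b}.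

Lemma uniquely_separatesC a b : uniquely_separates a b -> uniquely_separates b a.
Proof. by case=> dab eqab; split=> [|t /eqab //]; rewrite eq_sym. Qed.

Lemma uniq_resP P :
  reflect (exists x y, P = [set x; y] /\ uniquely_separates x y)
          (P \in uniq_res e R r).
Proof.
rewrite inE; apply: (iffP existsP) => [[x] | [x [y [-> [dxy eqxy]]]]].
  case/existsP=> y /and3P [/eqP -> dxy /forallP eqxy].
  by exists x, y; split=> //; split=> // t Rt; apply/eqP/(implyP (eqxy t) Rt).
exists x; apply/existsP; exists y; rewrite eqxx dxy /=.
by apply/forallP => t; apply/implyP => Rt; apply/eqP/eqxy.
Qed.

Lemma uniq_res_pairP a b :
  reflect (uniquely_separates a b) ([set a; b] \in uniq_res e R r).
Proof.
apply: (iffP (uniq_resP _)) => [[x [y [/set2_eq[][-> ->] //]]] | sab].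
  exact: uniquely_separatesC.
by exists a, b.
Qed.

Lemma uniq_res_neq a b : [set a; b] \in uniq_res e R r -> a != b.
Proof. by case/uniq_res_pairP => dab _; apply: contraNneq dab => ->. Qed.

Lemma uniq_res_memR a b : [set a; b] \in uniq_res e R r -> a \in R -> a = r.
Proof.
move=> Uab aR; have ab := uniq_res_neq Uab.
case/uniq_res_pairP: Uab => _ eqab; apply/eqP; apply: contraNT ab => ar.
by rewrite -dist_eq0 -(eqab a) ?distxx // !inE ar.
Qed.

Lemma uniq_res_notin_or_at P : P \in uniq_res e R r ->
  (exists x y, [/\ x \notin R, y \notin R & P = [set x; y]]) \/
  (exists2 y, y \notin R & P = [set r; y]).
Proof.
move=> UP; have /uniq_resP [x [y [EP _]]] := UP; rewrite EP in UP.
have Uyx : [set y; x] \in uniq_res e R r by rewrite setUC.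
have xy := uniq_res_neq UP.
have [xR | xNR] := boolP (x \in R); have [yR | yNR] := boolP (y \in R).
- by rewrite (uniq_res_memR UP xR) (uniq_res_memR Uyx yR) eqxx in xy.
- by right; exists y; rewrite // EP (uniq_res_memR UP xR).
- by right; exists x; rewrite // EP setUC (uniq_res_memR Uyx yR).
- by left; exists x, y.
Qed.

Lemma uniq_res_trans x y z : resolving e R -> r \in R -> y != z ->
  [set x; y] \in uniq_res e R r -> [set x; z] \in uniq_res e R r ->
  [set y; z] \in uniq_res e R r.
Proof.
move=> resR Rr yz /uniq_res_pairP[_ eqxy] /uniq_res_pairP[_ eqxz].
have eqyz : {in R :\ r, forall t, dist e t y = dist e t z}.
  by move=> t Rt; rewrite -eqxy ?eqxz.
apply/uniq_res_pairP; split=> //.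
have [t Rt dyz] := resR y z yz.
have [<- // | tr] := eqVneq t r.
by rewrite eqyz ?eqxx ?inE ?tr in dyz.
Qed.

End Pairs.

Lemma colour_edge_uniq_res (R : {set T}) r a b :
  r \in R -> [set a; b] \in colour_edges e R ->
  ([set a; b] \in uniq_res e R r) = (dist e r a != dist e r b).
Proof.
move=> Rr /bigcupP [r' Rr' Ur'].
apply/idP/idP => [/uniq_res_pairP [] // | dab].
have [<- // | r'r] := eqVneq r' r.
case/uniq_res_pairP: Ur' => _ eqab.
have Rr'r : r \in R :\ r' by rewrite !inE eq_sym r'r Rr.
by rewrite (eqab r Rr'r) eqxx in dab.
Qed.

Section ClosedWalks.
Variables (U : eqType) (f : T -> U).

Definition changes (s : seq (T * T)) := count (fun p => f p.1 != f p.2) s.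

Lemma changes_walk0 x y s : changes (zip (x :: s) (rcons s y)) = 0 -> f x = f y.
Proof.
elim: s x => [|z s IH] x /=; first by case: eqP.
by case: eqP => // -> /IH.
Qed.

Lemma changes_walk1 x y s : changes (zip (x :: s) (rcons s y)) = 1 -> f x != f y.
Proof.
elim: s x => [|z s IH] x /=; first by case: eqP.
by case: eqP => [-> /IH // | fxz [] /changes_walk0 <-]; apply/eqP.
Qed.

Lemma changes_closed_walk_neq1 s : changes (zip s (rot 1 s)) != 1.
Proof.
case: s => // x s; rewrite rot1_cons.
by apply/eqP => /changes_walk1; rewrite eqxx.
Qed.

End ClosedWalks.

Lemma colour_cycle_count_uniq_res (R : {set T}) s r :
  r \in R -> colour_cycle e R s ->
  has (mem (uniq_res e R r)) (cycle_edges s) ->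
  2 <= count (mem (uniq_res e R r)) (cycle_edges s).
Proof.
move=> Rr /and3P [_ _ /allP colE]; rewrite has_count.
have -> : count (mem (uniq_res e R r)) (cycle_edges s) =
          changes (dist e r) (zip s (rot 1 s)).
  rewrite count_map; apply: eq_in_count => p sp /=.
  by apply: colour_edge_uniq_res => //; apply/colE/map_f.
by have := changes_closed_walk_neq1 (dist e r) s; case: changes => [|[]].
Qed.

Section BasisForced.
Variables (R : {set T}) (b : T).
Hypotheses (forced_b : basis_forced e b) (basisR : metric_basis e R).

Lemma basis_forced_mem : b \in R.
Proof. exact: forced_b. Qed.

Lemma resolving_uniq_res_sep (A : {set T}) : R :\ b \subset A ->
    (forall u v, [set u; v] \in uniq_res e R b ->
       exists2 t, t \in A & dist e t u != dist e t v) ->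
  resolving e A.
Proof.
move=> RbA sepA u v uv; have [t Rt dt] := basisR.1 u v uv.
have [tb | tb] := eqVneq t b; last first.
  by exists t => //; apply: (subsetP RbA); rewrite !inE tb Rt.
have [/existsP [t' /andP [Rt' dt']] | /existsPn nsep] :=
  boolP [exists t', (t' \in R :\ b) && (dist e t' u != dist e t' v)].
  by exists t' => //; apply: (subsetP RbA).
apply: sepA; apply/uniq_res_pairP; split; first by rewrite -tb.
by move=> t' Rt'; have := nsep t'; rewrite Rt' negbK => /eqP.
Qed.

Lemma resolving_swap_forced w : resolving e (w |: (R :\ b)) -> w = b.
Proof.
move=> resW; have : b \in w |: (R :\ b).
  apply: forced_b; split=> // S resS; apply: leq_trans (basisR.2 S resS).
  by rewrite cardsU1 (cardsD1 b R) basis_forced_mem leq_add2r leq_b1.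
by rewrite !inE eqxx orbF => /eqP.
Qed.

Lemma uniq_res_forced_neq0 : uniq_res e R b != set0.
Proof.
apply/eqP => U0.
have resRb : resolving e (R :\ b).
  by apply: resolving_uniq_res_sep => // u v; rewrite U0 inE.
by have := basisR.2 _ resRb; rewrite (cardsD1 b R) basis_forced_mem ltnn.
Qed.

Lemma uniq_res_forced_neq1 x y : uniq_res e R b != [set [set x; y]].
Proof.
apply/eqP => U1.
have Uxy : [set x; y] \in uniq_res e R b by rewrite U1 set11.
have pair_end_forced w w' : [set w; w'] = [set x; y] -> w = b.
  move=> Eww'; apply: resolving_swap_forced.
  apply: resolving_uniq_res_sep; first exact: subsetUr.
  move=> u v; rewrite U1 => /set1P Euv; exists w; first exact: setU11.
  have ww' : w != w' by apply: (@uniq_res_neq R b); rewrite Eww'.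
  case/set2_eq: (etrans Euv (esym Eww')) => [][-> ->].
    by rewrite distxx eq_sym dist_eq0.
  by rewrite distxx dist_eq0.
have xb := pair_end_forced x y erefl.
have yb := pair_end_forced y x (setUC _ _).
by have := uniq_res_neq Uxy; rewrite xb yb eqxx.
Qed.

Lemma card_uniq_res_forced : 2 <= #|uniq_res e R b|.
Proof.
case: ltnP => // /[dup]; rewrite leq_eqVlt ltnS leqn0 cards_eq0.
case/orP => [/cards1P [P U1] _ | /eqP U0]; last by case/eqP: uniq_res_forced_neq0.
have /uniq_resP [x [y [EP _]]] : P \in uniq_res e R b by rewrite U1 set11.
by case/eqP: (uniq_res_forced_neq1 x y); rewrite U1 EP.
Qed.

Lemma uniq_res_forced_outside :
  exists x y, [/\ x \notin R, y \notin R & [set x; y] \in uniq_res e R b].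
Proof.
have /card_gt1P [P1 [P2 [UP1 UP2 P12]]] := card_uniq_res_forced.
case: (uniq_res_notin_or_at UP1) => [[x [y [xR yR EP]]] | [y1 y1R E1]].
  by exists x, y; rewrite -EP.
case: (uniq_res_notin_or_at UP2) => [[x [y [xR yR EP]]] | [y2 y2R E2]].
  by exists x, y; rewrite -EP.
exists y1, y2; split=> //; apply: (uniq_res_trans (x := b)) => //.
- exact: basisR.1.
- exact: basis_forced_mem.
- by apply: contraNneq P12 => y12; rewrite E1 E2 y12.
- by rewrite -E1.
- by rewrite -E2.
Qed.

End BasisForced.

End UniquelyResolvedPairs.

Theorem lemma10 (T : finType) (e : rel T) :
  simple_graph e -> connected_graph e ->
  (* (i) *)
  (forall (R : {set T}) (s : seq T) (r : T),
     r \in R -> colour_cycle e R s ->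
     has (fun P => P \in uniq_res e R r) (cycle_edges s) ->
     2 <= count (fun P => P \in uniq_res e R r) (cycle_edges s)) /\
  (* (ii) *)
  (forall (R : {set T}) (r x y z : T),
     resolving e R -> r \in R -> x != y -> x != z -> y != z ->
     [set x; y] \in uniq_res e R r -> [set x; z] \in uniq_res e R r ->
     [set y; z] \in uniq_res e R r) /\
  (* (iii) *)
  (forall (b : T) (R : {set T}),
     basis_forced e b -> metric_basis e R -> 2 <= #|uniq_res e R b|) /\
  (* (iv) *)
  (forall (b : T) (R : {set T}),
     basis_forced e b -> metric_basis e R ->
     exists x y : T, [/\ x \notin R, y \notin R & [set x; y] \in uniq_res e R b]).
Proof.
move=> _ _; split; first exact: colour_cycle_count_uniq_res.
split; first by move=> R r x y z resR Rr _ _; exact: uniq_res_trans.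
split=> b R; [exact: card_uniq_res_forced | exact: uniq_res_forced_outside].
Qed.
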